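(* Let $\phi$ be a formula, $\xi,\eta$ models, and $k,m\in\omega$ with $m>0$, such that: (1) $\mathrm{Sub}(\phi,\langle k,0\rangle,\xi)=\mathrm{Sub}(\phi,\langle k+m,0\rangle,\xi)$; (2) $\xi(\mathbf t,p)=\eta(\mathbf t,p)$ for all $\mathbf t<\langle k+m,0\rangle$ and all $p\in Var$; (3) $\eta(s_1,s_2,p)=\eta(s_1+m,s_2,p)$ for all $\mathbf s\ge\langle k,0\rangle$ and all $p\in Var$; (4) whenever $\psi\,\mathtt U\,\theta\in\mathrm{Sub}(\phi)$ and $\xi\models_{\langle k,0\rangle}\psi\,\mathtt U\,\theta$, there is $\mathbf r$ with $\langle k,0\rangle\le\mathbf r<\langle k+m,0\rangle$ and $\xi\models_{\mathbf r}\theta$. Then (a) $\mathrm{Sub}(\phi,\mathbf t,\xi)=\mathrm{Sub}(\phi,\mathbf t,\eta)$ for all $\mathbf t<\langle k+m,0\rangle$; and (b) $\mathrm{Sub}(\phi,\mathbf s,\eta)=\mathrm{Sub}(\phi,\langle s_1+m,s_2\rangle,\eta)$ for all $\mathbf s\ge\langle k,0\rangle$.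
   Context: Fix $Var=\{p_n : n\in\omega\}$. The formulas of $L([1],[\omega],\mathtt u,\mathtt U)$ form the smallest set containing $Var$ and closed under $\neg\phi$, $[1]\phi$, $[\omega]\phi$, $(\phi\wedge\psi)$, $(\phi\,\mathtt u\,\psi)$, $(\phi\,\mathtt U\,\psi)$. Time instants are pairs $\mathbf t=\langle t_1,t_2\rangle\in\omega\times\omega$ ordered lexicographically ($\langle i,j\rangle\le\langle k,l\rangle$ iff $i<k$, or $i=k$ and $j\le l$). A model is a function $\xi:\omega\times\omega\times Var\to\{0,1\}$; we write $\xi(\mathbf t,p)$ for $\xi(t_1,t_2,p)$. Satisfaction: $\xi\models_{\mathbf r}p$ iff $\xi(r_1,r_2,p)=1$; $\neg,\wedge$ classical; $\xi\models_{\mathbf r}[1]\phi$ iff $\xi\models_{\langle r_1,r_2+1\rangle}\phi$; $\xi\models_{\mathbf r}[\omega]\phi$ iff $\xi\models_{\langle r_1+1,0\rangle}\phi$; $\xi\models_{\mathbf r}\phi\,\mathtt u\,\psi$ iff there is $k\in\omega$ with $\xi\models_{\langle r_1,r_2+k\rangle}\psi$ and $\xi\models_{\langle r_1,r_2+i\rangle}\phi$ for all $0\le i<k$; $\xi\models_{\mathbf r}\phi\,\mathtt U\,\psi$ iff there is $\mathbf s\ge\mathbf r$ with $\xi\models_{\mathbf s}\psi$ and $\xi\models_{\mathbf t}\phi$ for all $\mathbf r\le\mathbf t<\mathbf s$. $\mathrm{Sub}(\phi)$ is the set of subformulas of $\phi$, and $\mathrm{Sub}(\phi,\mathbf t,\xi)=\{\psi\in\mathrm{Sub}(\phi)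 : \xi\models_{\mathbf t}\psi\}$. *)

From Stdlib Require Import Arith.

(* Formulas of L([1],[omega],u,U); propositional variable p_n is [Var n]. *)
Inductive form : Type :=
| Var : nat -> form
| Neg : form -> form
| Next1 : form -> form
| NextW : form -> form
| And : form -> form -> form
| Until : form -> form -> form  (* phi u psi  (within the current omega-block) *)
| UNTIL : form -> form -> form. (* phi U psi  (along the lexicographic order) *)

(* Time instants: pairs of naturals, lexicographic order. *)
Definition tlex (t s : nat * nat) : Prop :=
  fst t < fst s \/ (fst t = fst s /\ snd t <= snd s).
Definition tlt (t s : nat * nat) : Prop := tlex t s /\ t <> s.

(* A model: xi t1 t2 n is the truth value of p_n at <t1,t2>. *)
Definition model := nat -> nat -> nat -> bool.

Fixpoint sat (xi : model) (r : nat * nat) (f : form) {struct f} : Prop :=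
  match f with
  | Var n => xi (fst r) (snd r) n = true
  | Neg g => ~ sat xi r g
  | Next1 g => sat xi (fst r, S (snd r)) g
  | NextW g => sat xi (S (fst r), 0) g
  | And g h => sat xi r g /\ sat xi r h
  | Until g h => exists k, sat xi (fst r, snd r + k) h /\
                   forall i, i < k -> sat xi (fst r, snd r + i) g
  | UNTIL g h => exists s, tlex r s /\ sat xi s h /\
                   forall t, tlex r t -> tlt t s -> sat xi t g
  end.

Fixpoint subf (psi phi : form) {struct phi} : Prop :=
  psi = phi \/
  match phi with
  | Var _ => False
  | Neg g | Next1 g | NextW g => subf psi g
  | And g h | Until g h | UNTIL g h => subf psi g \/ subf psi h
  end.

(* Sub(phi,t,xi) = Sub(phi,s,eta) *)
Definition SubEq (phi : form) (xi : model) (t : nat * nat) (eta : model) (s : nat * nat) : Prop :=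
  forall psi, subf psi phi -> (sat xi t psi <-> sat eta s psi).

From Stdlib Require Import Arith Lia Setoid.

(* Write K = <k+m,0> for the end of the first period and L = <k,0> for its
   start.  Two general facts about a single model M are proved first:
   - periodicity propagates from atoms to formulas: if the atoms of M repeat
     with period m from L on, then so does every formula (induction on
     formulas, shifting U-witnesses by m);
   - in such a model with m > 0, a U-formula true at L already has a witness
     in the window [L, K) (move a late witness down by multiples of m).
   Next, a transfer lemma for U: if two models agree on psi and theta below K,
   and U-formulas can be carried from K back to L in the first model (with a
   witness in [L, K)) and from L forward to K in the second, then psi U theta
   passes from the first model to the second at every t < K.
   Part (a) then follows by induction on subformulas of phi, applying the
   transfer lemma in both directions (xi uses hypotheses (1) and (4), eta
   uses its periodicity); part (b) is the periodicity of eta. *)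

Lemma tlt_iff t s :
  tlt t s <-> (fst t < fst s \/ (fst t = fst s /\ snd t < snd s)).
Proof.
  destruct t as [a b], s as [c d]; unfold tlt, tlex; simpl; split.
  - intros [[Hlt | [Heq Hle]] Hne]; [now left | right].
    split; [assumption |].
    destruct (Nat.eq_dec b d); [subst; congruence | lia].
  - intros H; split; [lia |]. intros E; injection E; intros; subst; lia.
Qed.

Ltac lex := repeat rewrite tlt_iff in *; unfold tlex in *; simpl in *; lia.

Lemma tlt_or_tlex t u : tlt t u \/ tlex u t.
Proof. rewrite tlt_iff; unfold tlex; lia. Qed.

Lemma subf_refl g : subf g g.
Proof. destruct g; left; reflexivity. Qed.

Lemma subf_trans a b c : subf a b -> subf b c -> subf a c.
Proof.
  induction c; simpl; intros Hab [E | H]; subst; auto; try tauto;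
    right; try (destruct H; [left | right]); auto.
Qed.

Ltac subf_child :=
  match goal with
  | Hsub : subf _ ?phi |- subf _ ?phi =>
      eapply subf_trans; [| exact Hsub]; simpl; right;
      first [apply subf_refl | left; apply subf_refl | right; apply subf_refl]
  end.

Definition holds_on (M : model) (g : form) (t s : nat * nat) : Prop :=
  forall u, tlex t u -> tlt u s -> sat M u g.

Lemma until_prefix M t u g h :
  tlex t u -> sat M u (UNTIL g h) -> holds_on M g t u -> sat M t (UNTIL g h).
Proof.
  intros Htu [s [Hus [Hh Hg]]] Hg'. exists s; split; [lex | split; auto].
  intros v H1 H2. destruct (tlt_or_tlex v u) as [H | H]; auto.
Qed.

Lemma until_intermediate M t u s g h :
  tlex t u -> tlex u s -> sat M s h -> holds_on M g t s ->
  sat M u (UNTIL g h) /\ holds_on M g t u.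
Proof.
  intros H1 H2 Hh Hg. split.
  - exists s; repeat split; auto. intros v A B. apply Hg; lex.
  - intros v A B. apply Hg; lex.
Qed.

Lemma until_transfer M1 M2 K t s g h :
  (forall u, tlt u K -> (sat M1 u g <-> sat M2 u g)) ->
  (forall u, tlt u K -> (sat M1 u h <-> sat M2 u h)) ->
  tlex t s -> tlt s K -> sat M1 s h -> holds_on M1 g t s ->
  sat M2 t (UNTIL g h).
Proof.
  intros Eg Eh Hts HsK Hh Hg. exists s; repeat split; auto.
  - apply Eh; auto.
  - intros u A B. apply Eg; [lex | auto].
Qed.

Definition window_witness (M : model) (L K : nat * nat) (g h : form) : Prop :=
  exists r, tlex L r /\ tlt r K /\ sat M r h /\ holds_on M g L r.

Section Periodic.

Variables (M : model) (k m : nat).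

Hypothesis atoms_periodic :
  forall s, tlex (k, 0) s -> forall p, M (fst s) (snd s) p = M (fst s + m) (snd s) p.

Lemma sat_periodic f s :
  tlex (k, 0) s -> (sat M s f <-> sat M (fst s + m, snd s) f).
Proof.
  revert s; induction f; intros [a b] Hs; simpl.
  - pose proof (atoms_periodic (a, b) Hs n) as E; simpl in E; rewrite E; tauto.
  - rewrite (IHf (a, b) Hs); tauto.
  - apply (IHf (a, S b)); lex.
  - replace (S (a + m)) with (S a + m) by lia. apply (IHf (S a, 0)); lex.
  - rewrite (IHf1 (a, b) Hs), (IHf2 (a, b) Hs); tauto.
  - split; intros [j [Hj Hi]]; exists j; split;
      try (intros i Hi'; apply (IHf1 (a, b + i)); [lex | simpl in *; auto]);
      (apply (IHf2 (a, b + j)); [lex | simpl in *; auto]).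
  - split; intros [[c d] [Hu [Hh Hg]]].
    + exists (c + m, d); split; [lex | split].
      * apply (IHf2 (c, d)); [lex | auto].
      * intros [e e'] A B. replace e with (e - m + m) by lex.
        apply (IHf1 (e - m, e')); [lex |]. apply Hg; lex.
    + exists (c - m, d); split; [lex | split].
      * apply (IHf2 (c - m, d)); [lex |]. simpl.
        replace (c - m + m) with c by lex. auto.
      * intros [e e'] A B. apply (IHf1 (e, e')); [lex |]. apply Hg; lex.
Qed.

Hypothesis m_pos : 0 < m.

Lemma until_witness_shift_down g h s :
  k + m <= fst s -> sat M s h -> holds_on M g (k, 0) s ->
  sat M (fst s - m, snd s) h /\ holds_on M g (k, 0) (fst s - m, snd s).
Proof.
  destruct s as [a b]; simpl; intros Ha Hh Hg. split.
  - apply (sat_periodic h (a - m, b)); [lex |]. simpl.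
    replace (a - m + m) with a by lia. exact Hh.
  - intros u A B. apply Hg; lex.
Qed.

Lemma until_window g h :
  sat M (k, 0) (UNTIL g h) -> window_witness M (k, 0) (k + m, 0) g h.
Proof.
  intros [s [Hs [Hh Hg]]].
  remember (fst s) as n eqn:En; revert s En Hs Hh Hg.
  induction n as [n IH] using lt_wf_ind; intros s En Hs Hh Hg.
  destruct (Nat.lt_ge_cases n (k + m)) as [Hlt | Hge].
  - exists s; split; [exact Hs | split; [lex | auto]].
  - destruct (until_witness_shift_down g h s) as [Hh' Hg']; [lia | auto | auto |].
    apply (IH (n - m)) with (s := (fst s - m, snd s)); [lia | simpl; lia | lex | auto | auto].
Qed.

End Periodic.

Lemma until_agree_below M1 M2 L K g h t :
  (forall u, tlt u K -> (sat M1 u g <-> sat M2 u g)) ->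
  (forall u, tlt u K -> (sat M1 u h <-> sat M2 u h)) ->
  (sat M1 K (UNTIL g h) -> window_witness M1 L K g h) ->
  (sat M2 L (UNTIL g h) -> sat M2 K (UNTIL g h)) ->
  tlt t K -> sat M1 t (UNTIL g h) -> sat M2 t (UNTIL g h).
Proof.
  intros Eg Eh Hback Hforth Ht [s [Hts [Hh Hg]]].
  destruct (tlt_or_tlex s K) as [HsK | HKs].
  - eapply until_transfer; eauto.
  - destruct (until_intermediate M1 t K s g h) as [HK HgtK]; auto; [lex |].
    destruct (Hback HK) as [r [HLr [HrK [Hhr Hgr]]]].
    assert (HL : sat M2 L (UNTIL g h)) by (eapply until_transfer; eauto).
    apply (until_prefix M2 t K); [lex | auto |].
    intros u A B. apply Eg; auto.
Qed.

(* In xi, hypothesis (4) provides a window witness for U-subformulas of phi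
   true at <k,0>: either the given witness is already early enough, or the
   instant supplied by (4) precedes it. *)
Lemma until_window_of_hyp (phi : form) (xi : model) (k m : nat) g h :
  (forall psi theta, subf (UNTIL psi theta) phi -> sat xi (k, 0) (UNTIL psi theta) ->
     exists r, tlex (k, 0) r /\ tlt r (k + m, 0) /\ sat xi r theta) ->
  subf (UNTIL g h) phi -> sat xi (k, 0) (UNTIL g h) ->
  window_witness xi (k, 0) (k + m, 0) g h.
Proof.
  intros Hwin Hsub HU.
  destruct (Hwin g h Hsub HU) as [r [HLr [HrK Hhr]]].
  destruct HU as [s [Hs [Hh Hg]]].
  destruct (tlt_or_tlex s (k + m, 0)) as [HsK | HKs].
  - exists s; auto.
  - exists r; split; [exact HLr | split; [exact HrK | split; [exact Hhr |]]].
    intros u A B. apply Hg; [lex | lex].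
Qed.

Section Agreement.

Variables (phi : form) (xi eta : model) (k m : nat).
Hypothesis m_pos : 0 < m.
Hypothesis xi_repeats : SubEq phi xi (k, 0) xi (k + m, 0).
Hypothesis atoms_agree :
  forall t, tlt t (k + m, 0) -> forall p, xi (fst t) (snd t) p = eta (fst t) (snd t) p.
Hypothesis eta_periodic :
  forall s, tlex (k, 0) s -> forall p, eta (fst s) (snd s) p = eta (fst s + m) (snd s) p.
Hypothesis xi_window :
  forall psi theta, subf (UNTIL psi theta) phi -> sat xi (k, 0) (UNTIL psi theta) ->
    exists r, tlex (k, 0) r /\ tlt r (k + m, 0) /\ sat xi r theta.

Lemma eta_repeats f : sat eta (k, 0) f <-> sat eta (k + m, 0) f.
Proof. apply (sat_periodic eta k m eta_periodic f (k, 0)); lex. Qed.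

(* Part (a): by induction on f; only [NextW] at the last instant of the
   period and the U case look past <k+m,0>. *)
Lemma agree_below f :
  subf f phi -> forall t, tlt t (k + m, 0) -> (sat xi t f <-> sat eta t f).
Proof.
  induction f; intros Hsub [a b] Ht.
  - specialize (atoms_agree (a, b) Ht n); simpl in *. rewrite atoms_agree; tauto.
  - simpl. rewrite (IHf ltac:(subf_child) (a, b) Ht); tauto.
  - apply IHf; [subf_child | lex].
  - assert (Hf : subf f phi) by subf_child. simpl.
    destruct (Nat.lt_ge_cases (S a) (k + m)).
    + apply IHf; auto; lex.
    + (* the next block starts at <k+m,0>: go through <k,0> *)
      replace (S a) with (k + m) by lex.
      rewrite <- (xi_repeats f Hf), <- eta_repeats. apply IHf; auto; lex.
  - simpl. rewrite (IHf1 ltac:(subf_child) (a, b) Ht), (IHf2 ltac:(subf_child) (a, b) Ht).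
    tauto.
  - assert (E1 := IHf1 ltac:(subf_child)); assert (E2 := IHf2 ltac:(subf_child)).
    simpl; split; intros [j [Hj Hi]]; exists j; split;
      try (intros i Hi'; apply E1; auto; lex); apply E2; auto; lex.
  - assert (E1 := IHf1 ltac:(subf_child)); assert (E2 := IHf2 ltac:(subf_child)).
    (* xi returns from K to the window by (1) and (4); eta by periodicity *)
    split.
    + apply (until_agree_below xi eta (k, 0) (k + m, 0)); auto.
      * intros HK. apply (until_window_of_hyp phi xi k m); auto.
        apply (xi_repeats _ Hsub); exact HK.
      * apply eta_repeats.
    + apply (until_agree_below eta xi (k, 0) (k + m, 0)).
      * intros u Hu; symmetry; auto.
      * intros u Hu; symmetry; auto.
      * intros HK. apply (until_window eta k m); auto. apply eta_repeats; exact HK.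
      * intros HL. apply (xi_repeats _ Hsub); exact HL.
      * exact Ht.
Qed.

End Agreement.

Theorem mainTheorem14 (phi : form) (xi eta : model) (k m : nat) :
  0 < m ->
  SubEq phi xi (k, 0) xi (k + m, 0) ->
  (forall t, tlt t (k + m, 0) -> forall p, xi (fst t) (snd t) p = eta (fst t) (snd t) p) ->
  (forall s, tlex (k, 0) s -> forall p, eta (fst s) (snd s) p = eta (fst s + m) (snd s) p) ->
  (forall psi theta, subf (UNTIL psi theta) phi -> sat xi (k, 0) (UNTIL psi theta) ->
     exists r, tlex (k, 0) r /\ tlt r (k + m, 0) /\ sat xi r theta) ->
  (forall t, tlt t (k + m, 0) -> SubEq phi xi t eta t) /\
  (forall s, tlex (k, 0) s -> SubEq phi eta s eta (fst s + m, snd s)).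
Proof.
  intros Hm Hrep Hagree Hper Hwin. split.
  - intros t Ht psi Hpsi. exact (agree_below phi xi eta k m Hm Hrep Hagree Hper Hwin psi Hpsi t Ht).
  - intros s Hs psi _. exact (sat_periodic eta k m Hper psi s Hs).
Qed.
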